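(* Let $g_{n,j}$ be the number of decorated partial dual skew Dyck paths consisting of $n$ steps and ending at level $j$, and let $G(z,u)=\sum_{n,j\ge0}g_{n,j}z^nu^j$. Put $W=\sqrt{1-6z^2+5z^4}$, with the branch satisfying $W=1$ at $z=0$, and $$s_1=\frac{2z}{1+z^2-W},\qquad S=\frac{1+z^2-W}{2z^2}.$$ Then $$G(z,u)=\frac{3z^2-3+W}{2z(2-z^2)(u-s_1)},$$ and for every $j\ge 0$, $$[u^j]G(z,u)=\frac{3z^2-3+W}{2(z^2-2)}\,z^jS^{j+1}.$$
   Context: A decorated (partial) dual skew Dyck path is a lattice path with the following properties. - It starts at $(0,0)$. - It uses down-steps $(1,-1)$ and up-steps $(1,1)$. - Each up-step is coloured either black or blue. - It never goes below the $x$-axis. - A down-step is never immediately followed by a blue up-step, and a blue up-step is never immediately followed by a down-step. The path need not end on the $x$-axis; its level is the final $y$-coordinate. The empty path counts, with $n=0$ and $j=0$. These paths are the mirror images of skew Dyck path prefixes, with a blue up-step encoding a step $(-1,1)$. *)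

From Stdlib Require Import Reals Lra ZArith List Bool.
From Coquelicot Require Import Coquelicot.
Import ListNotations.
Open Scope R_scope.
Open Scope bool_scope.

Inductive step : Type :=
  | Down
  | UpBlack
  | UpBlue.

Definition step_dy (s : step) : Z :=
  match s with Down => (-1)%Z | UpBlack => 1%Z | UpBlue => 1%Z end.

Fixpoint level (w : list step) : Z :=
  match w with [] => 0%Z | s :: w' => (step_dy s + level w')%Z end.

Fixpoint never_below (h : Z) (w : list step) : bool :=
  match w with
  | [] => true
  | s :: w' => let h' := (h + step_dy s)%Z in (0 <=? h')%Z && never_below h' w'
  end.

Definition bad_pair (a b : step) : bool :=
  match a, b with
  | Down, UpBlue => true
  | UpBlue, Down => true
  | _, _ => false
  end.

Fixpoint no_bad_pair (w : list step) : bool :=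
  match w with
  | a :: ((b :: _) as t) => negb (bad_pair a b) && no_bad_pair t
  | _ => true
  end.

Definition decorated (w : list step) : bool := never_below 0 w && no_bad_pair w.

Fixpoint words (n : nat) : list (list step) :=
  match n with
  | O => [[]]
  | S m => flat_map (fun w => [Down :: w; UpBlack :: w; UpBlue :: w]) (words m)
  end.

Definition g (n j : nat) : nat :=
  length (filter (fun w => decorated w && Z.eqb (level w) (Z.of_nat j)) (words n)).

Definition Wf (z : R) : R := sqrt (1 - 6 * z ^ 2 + 5 * z ^ 4).
Definition s1 (z : R) : R := 2 * z / (1 + z ^ 2 - Wf z).
Definition Sf (z : R) : R := (1 + z ^ 2 - Wf z) / (2 * z ^ 2).

(* Sort the decorated paths of length n ending at level m by their last step: a down-step,
   a black up-step or a blue up-step.  Appending one step gives, for the generating functions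
   D_m, B_m, L_m of the three classes (in the variable z),
     B_0 = 1,  L_0 = 0,  B_(m+1) = z (D_m + B_m + L_m),  L_(m+1) = z (B_m + L_m),
     D_m = z (D_(m+1) + B_(m+1)).
   Read upwards in m, a solution is determined by D_0, and for small z the down-component of
   a nonzero solution with B_0 = L_0 = 0 at least doubles from each level to the next.  The
   generating functions are bounded in m, so they coincide with the explicit bounded solution,
   whose components are multiples of (zS)^m, S being the root of
   z^2 S^2 - (1 + z^2) S + 2 - z^2 = 0 from the statement.  Summing the three classes gives
   [u^j] G = (S - 1) (zS)^j; as the counts vanish for j > n, G can be summed level by level,
   which gives the geometric series (S - 1) / (1 - zSu). *)

From Stdlib Require Import Reals Lra Lia List Bool.
From Coquelicot Require Import Coquelicot.
Import ListNotations.

Open Scope nat_scope.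

Definition step_eqb (s t : step) : bool :=
  match s, t with
  | Down, Down | UpBlack, UpBlack | UpBlue, UpBlue => true
  | _, _ => false
  end.

Definition sum_steps (F : step -> nat) : nat := F Down + F UpBlack + F UpBlue.

Lemma sum_steps_ext (F G : step -> nat) : (forall s, F s = G s) -> sum_steps F = sum_steps G.
Proof. intros E. unfold sum_steps. now rewrite !E. Qed.

Lemma sum_steps_eqb (F : step -> nat) s :
  sum_steps (fun t => if step_eqb t s then F t else 0) = F s.
Proof. destruct s; unfold sum_steps; simpl; lia. Qed.

Definition count_words (n : nat) (f : list step -> bool) : nat := length (filter f (words n)).

Lemma count_words_ext n f f' : (forall w, f w = f' w) -> count_words n f = count_words n f'.
Proof. intros E. unfold count_words. now rewrite (filter_ext _ _ E). Qed.

Lemma count_words_guard n b f :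
  count_words n (fun w => b && f w) = if b then count_words n f else 0.
Proof.
  destruct b; [reflexivity|].
  unfold count_words. induction (words n); simpl; auto.
Qed.

Lemma length_words n : length (words n) = 3 ^ n.
Proof.
  induction n as [|n IH]; [reflexivity|].
  cbn [words]. rewrite flat_map_constant_length with (c := 3) by reflexivity.
  rewrite IH, Nat.pow_succ_r'. lia.
Qed.

Lemma count_words_le n f : count_words n f <= 3 ^ n.
Proof. rewrite <- length_words. apply filter_length_le. Qed.

Lemma count_words_cons n f :
  count_words (S n) f = sum_steps (fun s => count_words n (fun w => f (s :: w))).
Proof.
  unfold count_words, sum_steps. cbn [words].
  induction (words n) as [|w l IH]; [reflexivity|]. cbn [flat_map app filter].
  destruct (f (Down :: w)), (f (UpBlack :: w)), (f (UpBlue :: w)); simpl; rewrite IH; lia.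
Qed.

Lemma count_words_snoc n : forall f,
  count_words (S n) f = sum_steps (fun s => count_words n (fun w => f (w ++ [s]))).
Proof.
  induction n as [|n IH]; intros f; [now rewrite count_words_cons|].
  rewrite count_words_cons. unfold sum_steps; cbv beta.
  rewrite (IH (fun w => f (Down :: w))), (IH (fun w => f (UpBlack :: w))),
    (IH (fun w => f (UpBlue :: w))), (count_words_cons n (fun w => f (w ++ [Down]))),
    (count_words_cons n (fun w => f (w ++ [UpBlack]))),
    (count_words_cons n (fun w => f (w ++ [UpBlue]))).
  unfold sum_steps; simpl. lia.
Qed.

Lemma count_words_last n (c : step -> bool) (f : list step -> bool) :
  count_words n (fun w => c (last w UpBlack) && f w) =
  sum_steps (fun s => if c s then count_words n (fun w => step_eqb (last w UpBlack) s && f w)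
                      else 0).
Proof.
  unfold count_words, sum_steps.
  destruct (c Down) eqn:ED, (c UpBlack) eqn:EK, (c UpBlue) eqn:EL;
    induction (words n) as [|w l IH]; simpl; try reflexivity;
    destruct (last w UpBlack); rewrite ?ED, ?EK, ?EL; destruct (f w); simpl; lia.
Qed.

Lemma level_snoc w s : level (w ++ [s]) = (level w + step_dy s)%Z.
Proof. induction w as [|t w IH]; simpl; rewrite ?IH; lia. Qed.

Lemma never_below_snoc w : forall h s,
  never_below h (w ++ [s]) = never_below h w && (0 <=? h + level w + step_dy s)%Z.
Proof.
  induction w as [|t w IH]; intros h s; simpl.
  - rewrite andb_true_r. do 2 f_equal. lia.
  - rewrite IH, andb_assoc. do 3 f_equal. lia.
Qed.

Lemma no_bad_pair_snoc w : forall s,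
  no_bad_pair (w ++ [s]) = no_bad_pair w && negb (bad_pair (last w UpBlack) s).
Proof.
  induction w as [|t [|t' w] IH]; intros s; [reflexivity| |].
  - simpl. now rewrite andb_true_r.
  - change (negb (bad_pair t t') && no_bad_pair ((t' :: w) ++ [s]) =
            negb (bad_pair t t') && no_bad_pair (t' :: w) &&
            negb (bad_pair (last (t' :: w) UpBlack) s)).
    now rewrite IH, andb_assoc.
Qed.

Lemma decorated_snoc w s :
  decorated (w ++ [s]) =
  decorated w && (0 <=? level w + step_dy s)%Z && negb (bad_pair (last w UpBlack) s).
Proof.
  unfold decorated. rewrite never_below_snoc, no_bad_pair_snoc, Z.add_0_l.
  destruct (never_below 0 w), (no_bad_pair w), (0 <=? level w + step_dy s)%Z; reflexivity.
Qed.

(* The empty path is filed under "ends with a black up-step": like a black up-step,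
   it puts no constraint on the next step. *)
Definition ends_at (s : step) (h : Z) (w : list step) : bool :=
  step_eqb (last w UpBlack) s && (decorated w && (level w =? h)%Z).

Definition paths (n : nat) (s : step) (h : Z) : nat := count_words n (ends_at s h).

Lemma ends_at_snoc s h w t :
  ends_at s h (w ++ [t]) =
  step_eqb t s && ((0 <=? h)%Z && (negb (bad_pair (last w UpBlack) t) &&
                   (decorated w && (level w =? h - step_dy t)%Z))).
Proof.
  unfold ends_at. rewrite decorated_snoc, last_last, level_snoc.
  destruct (Z.eqb_spec (level w + step_dy t) h) as [<-|E].
  - replace (level w + step_dy t - step_dy t)%Z with (level w) by lia. rewrite Z.eqb_refl.
    destruct (step_eqb t s), (decorated w), (bad_pair (last w UpBlack) t),
      (0 <=? level w + step_dy t)%Z; reflexivity.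
  - replace (level w =? h - step_dy t)%Z with false by (symmetry; apply Z.eqb_neq; lia).
    now rewrite !andb_false_r.
Qed.

Lemma paths_S n s h :
  paths (S n) s h =
  if (0 <=? h)%Z then sum_steps (fun t => if bad_pair t s then 0 else paths n t (h - step_dy s))
  else 0.
Proof.
  unfold paths at 1. rewrite count_words_snoc.
  assert (E : forall t, count_words n (fun w => ends_at s h (w ++ [t])) =
    if step_eqb t s then
      if (0 <=? h)%Z then
        count_words n (fun w => negb (bad_pair (last w UpBlack) t) &&
                                (decorated w && (level w =? h - step_dy t)%Z))
      else 0
    else 0).
  { intros t. rewrite <- !count_words_guard. apply count_words_ext. intros w. apply ends_at_snoc. }
  rewrite (sum_steps_ext _ _ E), sum_steps_eqb. destruct (0 <=? h)%Z; [|reflexivity].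
  rewrite (count_words_last n (fun t => negb (bad_pair t s))).
  destruct s; reflexivity.
Qed.

Lemma paths_O_neq s h : h <> 0%Z -> paths 0 s h = 0.
Proof.
  intros Hh. unfold paths, count_words, ends_at. cbn [words filter last level decorated].
  replace (0 =? h)%Z with false by (symmetry; apply Z.eqb_neq; lia).
  now rewrite !andb_false_r.
Qed.

Lemma paths_neg n s h : (h < 0)%Z -> paths n s h = 0.
Proof.
  intros Hh. destruct n as [|n]; [apply paths_O_neq; lia|].
  rewrite paths_S. now replace (0 <=? h)%Z with false by (symmetry; apply Z.leb_gt; lia).
Qed.

Lemma paths_above n : forall s h, (Z.of_nat n < h)%Z -> paths n s h = 0.
Proof.
  induction n as [|n IH]; intros s h Hh; [apply paths_O_neq; lia|].
  rewrite paths_S. destruct (0 <=? h)%Z; [|reflexivity].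
  destruct s; unfold sum_steps; simpl; rewrite !IH by lia; reflexivity.
Qed.

Lemma paths_S_nonneg n s h : (0 <= h)%Z ->
  paths (S n) s h = sum_steps (fun t => if bad_pair t s then 0 else paths n t (h - step_dy s)).
Proof.
  intros Hh. rewrite paths_S.
  now replace (0 <=? h)%Z with true by (symmetry; now apply Z.leb_le).
Qed.

Lemma paths_UpBlack_S n m :
  paths (S n) UpBlack (Z.of_nat (S m)) =
  paths n Down (Z.of_nat m) + paths n UpBlack (Z.of_nat m) + paths n UpBlue (Z.of_nat m).
Proof.
  rewrite paths_S_nonneg by lia.
  replace (Z.of_nat (S m) - step_dy UpBlack)%Z with (Z.of_nat m) by (cbn [step_dy]; lia).
  reflexivity.
Qed.

Lemma paths_UpBlue_S n m :
  paths (S n) UpBlue (Z.of_nat (S m)) = paths n UpBlack (Z.of_nat m) + paths n UpBlue (Z.of_nat m).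
Proof.
  rewrite paths_S_nonneg by lia.
  replace (Z.of_nat (S m) - step_dy UpBlue)%Z with (Z.of_nat m) by (cbn [step_dy]; lia).
  reflexivity.
Qed.

Lemma paths_Down_S n m :
  paths (S n) Down (Z.of_nat m) = paths n Down (Z.of_nat (S m)) + paths n UpBlack (Z.of_nat (S m)).
Proof.
  rewrite paths_S_nonneg by lia.
  replace (Z.of_nat m - step_dy Down)%Z with (Z.of_nat (S m)) by (cbn [step_dy]; lia).
  unfold sum_steps; simpl. lia.
Qed.

Lemma paths_up_S_0 n s : s <> Down -> paths (S n) s 0 = 0.
Proof.
  intros Hs. rewrite paths_S_nonneg by lia.
  destruct s; [congruence| |]; unfold sum_steps; simpl; rewrite !paths_neg by lia; reflexivity.
Qed.

Lemma g_paths n j : g n j = sum_steps (fun s => paths n s (Z.of_nat j)).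
Proof.
  exact (count_words_last n (fun _ => true) (fun w => decorated w && (level w =? Z.of_nat j)%Z)).
Qed.

Lemma g_above n j : n < j -> g n j = 0.
Proof. intros H. rewrite g_paths. unfold sum_steps. rewrite !paths_above by lia. reflexivity. Qed.

Lemma g_le n j : g n j <= 3 * 3 ^ n.
Proof.
  rewrite g_paths. unfold sum_steps, paths.
  pose proof (count_words_le n (ends_at Down (Z.of_nat j))).
  pose proof (count_words_le n (ends_at UpBlack (Z.of_nat j))).
  pose proof (count_words_le n (ends_at UpBlue (Z.of_nat j))). lia.
Qed.

Open Scope R_scope.

(* [is_series_plus] and [is_series_ext] state their equations in [NormedModule.sort _ _],
   where [ring] does not apply; these are their instances over [R]. *)
Lemma is_series_Rplus (a b : nat -> R) la lb :
  is_series a la -> is_series b lb -> is_series (fun n => a n + b n) (la + lb).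
Proof. exact (is_series_plus a b la lb). Qed.

Lemma is_series_ext_R (a b : nat -> R) l :
  (forall n, a n = b n) -> is_series a l -> is_series b l.
Proof. exact (is_series_ext a b l). Qed.

Lemma is_series_0 : is_series (fun _ : nat => 0) 0.
Proof.
  assert (H := is_series_scal_r 0 _ _ (is_series_geom 0 ltac:(rewrite Rabs_R0; lra))).
  rewrite Rmult_0_r in H. exact (is_series_ext_R _ _ _ (fun n => Rmult_0_r _) H).
Qed.

Lemma is_series_shift (a : nat -> R) z l :
  is_series (fun n => a (S n) * z ^ n) l -> is_series (fun n => a n * z ^ n) (a 0%nat + z * l).
Proof.
  intros H. apply is_series_decr_1.
  match goal with
  | |- is_series _ ?v => replace v with (z * l) by (unfold plus, opp; simpl; ring)
  end.
  apply (is_series_ext_R (fun n => z * (a (S n) * z ^ n))); [intros n; simpl; ring|].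
  exact (is_series_scal_l z _ _ H).
Qed.

Lemma is_series_le (a b : nat -> R) la lb :
  (forall n, a n <= b n) -> is_series a la -> is_series b lb -> la <= lb.
Proof.
  intros Hab Ha Hb.
  apply (is_lim_seq_le (sum_n a) (sum_n b) la lb); [|exact Ha|exact Hb].
  intros N. now apply sum_n_m_le.
Qed.

Lemma is_series_Rabs_le (a b : nat -> R) la lb :
  (forall n, Rabs (a n) <= b n) -> is_series a la -> is_series b lb -> Rabs la <= lb.
Proof.
  intros Hab Ha Hb. apply Rabs_le. split.
  - enough (- la <= lb) by lra.
    apply (is_series_le (fun n => - a n) b); [|exact (is_series_opp a la Ha)|exact Hb].
    intros n. specialize (Hab n). apply Rabs_le_between in Hab. lra.
  - apply (is_series_le a b); auto. intros n. specialize (Hab n). apply Rabs_le_between in Hab. lra.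
Qed.

Lemma nonpos_of_pow2_mul_le x K : (forall m, 2 ^ m * x <= K) -> x <= 0.
Proof.
  intros H. apply Rnot_lt_le. intros Hx.
  destruct (Pow_x_infinity 2 ltac:(rewrite Rabs_right; lra) (K / x + 1)) as [N HN].
  specialize (HN N (le_n N)). rewrite Rabs_right in HN by (apply Rle_ge, pow_le; lra).
  specialize (H N). apply Rge_le in HN.
  assert (K / x * x = K) by (field; lra).
  nra.
Qed.

Lemma is_series_geom_scal c q : Rabs q < 1 -> is_series (fun n => c * q ^ n) (c / (1 - q)).
Proof. intros Hq. exact (is_series_scal_l c _ _ (is_series_geom q Hq)). Qed.

Lemma sum_n_triangular (a : nat -> R) n N :
  (forall j, (n < j)%nat -> a j = 0) -> (n <= N)%nat -> sum_n a n = sum_n a N.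
Proof.
  intros Ha HN. induction HN as [|N HN IH]; [reflexivity|].
  rewrite sum_Sn, <- IH, (Ha (S N)) by lia. symmetry. exact (Rplus_0_r _).
Qed.

Lemma sum_n_triangular_switch (b : nat -> nat -> R) N :
  (forall n j, (n < j)%nat -> b n j = 0) ->
  sum_n (fun n => sum_n (b n) n) N = sum_n (fun j => sum_n (fun n => b n j) N) N.
Proof.
  intros Htri. rewrite <- sum_n_switch.
  apply sum_n_ext_loc. intros n Hn. apply sum_n_triangular; auto.
Qed.

Lemma is_lim_seq_geom_S k rho : 0 <= rho < 1 -> is_lim_seq (fun N => k * rho ^ S N) 0.
Proof.
  intros Hrho. apply (is_lim_seq_ext (fun N => (k * rho) * rho ^ N)); [intros; simpl; ring|].
  replace (Finite 0) with (Rbar_mult (k * rho) 0) by (simpl; f_equal; ring).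
  apply is_lim_seq_scal_l, is_lim_seq_geom. rewrite Rabs_right; lra.
Qed.

Lemma is_series_tail_bound (a : nat -> R) (l K q : R) N :
  0 <= q < 1 -> (forall k, Rabs (a k) <= K * q ^ k) -> is_series a l ->
  Rabs (l - sum_n a N) <= K * q ^ S N / (1 - q).
Proof.
  intros Hq Ha Hl.
  apply (is_series_Rabs_le (fun k => a (S N + k)%nat) (fun k => K * q ^ S N * q ^ k)).
  - intros k. rewrite Rmult_assoc, <- pow_add. apply Ha.
  - apply (is_series_incr_n a (S N)); [lia|].
    assert (E : l = l - sum_n a N + sum_n a N) by ring. rewrite E in Hl. exact Hl.
  - apply is_series_geom_scal. rewrite Rabs_right; lra.
Qed.

Lemma is_series_triangular (b : nat -> nat -> R) (c : nat -> R) (L M rho sigma : R) :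
  0 <= rho < 1 -> 0 <= sigma < 1 ->
  (forall n j, (n < j)%nat -> b n j = 0) ->
  (forall n j, Rabs (b n j) <= M * rho ^ n * sigma ^ j) ->
  (forall j, is_series (fun n => b n j) (c j)) -> is_series c L ->
  is_series (fun n => sum_n (b n) n) L.
Proof.
  intros Hrho Hsigma Htri Hb Hc HL.
  assert (HM : 0 <= M).
  { pose proof (Hb 0%nat 0%nat). pose proof (Rabs_pos (b 0 0)%nat). simpl in *. lra. }
  set (err N := sum_f_R0 (fun j => c j - sum_n (fun n => b n j) N) N).
  assert (Epartial : forall N, @eq R (sum_n (fun n => sum_n (b n) n) N) (sum_n c N - err N)).
  { intros N. rewrite (sum_n_triangular_switch b N Htri). unfold err.
    rewrite minus_sum, !sum_n_Reals.
    rewrite (sum_eq (fun j => sum_n (fun n => b n j) N) (fun j => sum_f_R0 (fun n => b n j) N))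
      by (intros; apply sum_n_Reals).
    ring. }
  set (K := M / ((1 - rho) * (1 - sigma))).
  assert (Eerr : forall N, Rabs (err N) <= K * rho ^ S N).
  { intros N. set (r := rho ^ S N). assert (Hr : 0 <= r) by (apply pow_le; lra).
    eapply Rle_trans; [apply Rsum_abs|]. eapply Rle_trans.
    { apply (sum_Rle _ (fun j => sigma ^ j * (M * r / (1 - rho)))). intros j _.
      replace (sigma ^ j * (M * r / (1 - rho))) with (M * sigma ^ j * r / (1 - rho))
        by (unfold Rdiv; ring).
      apply (is_series_tail_bound (fun n => b n j)); [exact Hrho| |exact (Hc j)].
      intros n. replace (M * sigma ^ j * rho ^ n) with (M * rho ^ n * sigma ^ j) by ring.
      apply Hb. }
    rewrite <- scal_sum, tech3 by lra.
    set (s := sigma ^ S N). assert (Hs : 0 <= s) by (apply pow_le; lra).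
    assert (0 <= M * r / ((1 - rho) * (1 - sigma))).
    { apply Rmult_le_pos; [nra|]. apply Rlt_le, Rinv_0_lt_compat, Rmult_lt_0_compat; lra. }
    replace (M * r / (1 - rho) * ((1 - s) / (1 - sigma)))
      with (M * r / ((1 - rho) * (1 - sigma)) * (1 - s)) by (field; lra).
    replace (K * r) with (M * r / ((1 - rho) * (1 - sigma)) * 1) by (unfold K; field; lra).
    apply Rmult_le_compat_l; lra. }
  unfold is_series. change (is_lim_seq (sum_n (fun n => sum_n (b n) n)) L).
  apply (is_lim_seq_ext (fun N => sum_n c N - err N)); [intros; symmetry; apply Epartial|].
  rewrite <- (Rminus_0_r L). apply is_lim_seq_minus'; [exact HL|].
  apply (is_lim_seq_le_le (fun N => - (K * rho ^ S N)) _ (fun N => K * rho ^ S N)).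
  - intros N. apply Rabs_le_between, Eerr.
  - apply (is_lim_seq_ext (fun N => - K * rho ^ S N)); [intros; ring|].
    now apply is_lim_seq_geom_S.
  - now apply is_lim_seq_geom_S.
Qed.

Section LevelSystem.

Variable z : R.

Definition level_system (b l d : nat -> R) : Prop :=
  (forall m, b (S m) = z * (d m + b m + l m)) /\
  (forall m, l (S m) = z * (b m + l m)) /\
  (forall m, d m = z * (d (S m) + b (S m))).

Lemma level_system_sub b l d b' l' d' :
  level_system b l d -> level_system b' l' d' ->
  level_system (fun m => b m - b' m) (fun m => l m - l' m) (fun m => d m - d' m).
Proof.
  intros (Hb & Hl & Hd) (Hb' & Hl' & Hd').
  repeat split; intros m.
  - rewrite Hb, Hb'. ring.
  - rewrite Hl, Hl'. ring.
  - rewrite Hd, Hd' at 1. ring.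
Qed.

Hypothesis Hz0 : z <> 0.
Hypothesis Hz : Rabs z <= 1 / 10.

Lemma level_system_growth b l d m :
  level_system b l d -> Rabs (b m) + Rabs (l m) <= Rabs (d m) ->
  Rabs (b (S m)) + Rabs (l (S m)) <= Rabs (d (S m)) /\ 2 * Rabs (d m) <= Rabs (d (S m)).
Proof.
  intros (Hb & Hl & Hd) Hm.
  set (t := Rabs z) in *. assert (Ht : 0 < t) by (apply Rabs_pos_lt, Hz0).
  assert (Eb : Rabs (b (S m)) <= t * (Rabs (d m) + Rabs (b m) + Rabs (l m))).
  { rewrite Hb, Rabs_mult. apply Rmult_le_compat_l; [apply Rabs_pos|].
    eapply Rle_trans; [apply Rabs_triang|]. apply Rplus_le_compat_r, Rabs_triang. }
  assert (El : Rabs (l (S m)) <= t * (Rabs (b m) + Rabs (l m))).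
  { rewrite Hl, Rabs_mult. apply Rmult_le_compat_l; [apply Rabs_pos|apply Rabs_triang]. }
  assert (Ed : Rabs (d m) <= t * (Rabs (d (S m)) + Rabs (b (S m)))).
  { rewrite Hd at 1. rewrite Rabs_mult.
    apply Rmult_le_compat_l; [apply Rabs_pos|apply Rabs_triang]. }
  assert (HD : 0 <= Rabs (d m)) by apply Rabs_pos.
  assert (Eb2 : Rabs (b (S m)) <= t * (2 * Rabs (d m))).
  { eapply Rle_trans; [exact Eb|]. apply Rmult_le_compat_l; lra. }
  assert (El2 : Rabs (l (S m)) <= t * Rabs (d m)).
  { eapply Rle_trans; [exact El|]. apply Rmult_le_compat_l; lra. }
  assert (Ed2 : 2 * Rabs (d m) <= Rabs (d (S m))).
  { assert (0 <= Rabs (d m) * (1 - 2 * t * t - 2 * t)) by (apply Rmult_le_pos; nra).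
    apply (Rmult_le_reg_l t); [exact Ht|]. nra. }
  split; [|exact Ed2].
  assert (t * Rabs (d m) <= Rabs (d m) / 10) by nra. lra.
Qed.

Lemma level_system_zero b l d :
  level_system b l d -> b 0%nat = 0 -> l 0%nat = 0 -> (exists K, forall m, Rabs (d m) <= K) ->
  forall m, b m = 0 /\ l m = 0 /\ d m = 0.
Proof.
  intros Hsys Hb0 Hl0 [K HK].
  assert (Hgrow : forall m,
    Rabs (b m) + Rabs (l m) <= Rabs (d m) /\ 2 ^ m * Rabs (d 0%nat) <= Rabs (d m)).
  { induction m as [|m [IH1 IH2]].
    - rewrite Hb0, Hl0, Rabs_R0. pose proof (Rabs_pos (d 0%nat)). simpl. lra.
    - destruct (level_system_growth b l d m Hsys IH1) as [H1 H2]. simpl. lra. }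
  assert (Hd0 : d 0%nat = 0).
  { apply Rabs_eq_0, Rle_antisym; [|apply Rabs_pos].
    apply (nonpos_of_pow2_mul_le _ K). intros m. eapply Rle_trans; [apply Hgrow|apply HK]. }
  destruct Hsys as (Hb & Hl & Hd).
  induction m as [|m (IHb & IHl & IHd)]; [auto|].
  assert (Hbm : b (S m) = 0) by (rewrite Hb, IHb, IHl, IHd; ring).
  repeat split; [exact Hbm|rewrite Hl, IHb, IHl; ring|].
  specialize (Hd m). rewrite IHd, Hbm, Rplus_0_r in Hd.
  destruct (Rmult_integral _ _ (eq_sym Hd)); [contradiction|assumption].
Qed.

Lemma level_system_unique b l d b' l' d' :
  level_system b l d -> level_system b' l' d' -> b 0%nat = b' 0%nat -> l 0%nat = l' 0%nat ->
  (exists K, forall m, Rabs (d m) <= K) -> (exists K, forall m, Rabs (d' m) <= K) ->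
  forall m, b m = b' m /\ l m = l' m /\ d m = d' m.
Proof.
  intros Hs Hs' Hb0 Hl0 [K HK] [K' HK'] m.
  destruct (level_system_zero _ _ _ (level_system_sub _ _ _ _ _ _ Hs Hs')
              ltac:(lra) ltac:(lra)) with m as (E1 & E2 & E3).
  - exists (K + K'). intros k. unfold Rminus. eapply Rle_trans; [apply Rabs_triang|].
    rewrite Rabs_Ropp. specialize (HK k). specialize (HK' k). lra.
  - lra.
Qed.

End LevelSystem.

Definition black_sol (z : R) (m : nat) : R :=
  match m with O => 1 | S _ => (Sf z - 1) / Sf z * (z * Sf z) ^ m end.
Definition blue_sol (z : R) (m : nat) : R :=
  match m with O => 0 | S _ => (z * Sf z) ^ m / Sf z end.
Definition down_sol (z : R) (m : nat) : R := (Sf z - 2) * (z * Sf z) ^ m.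

Section ExplicitSolution.

Variable z : R.
Hypothesis Hz0 : z <> 0.
Hypothesis Hz : z ^ 2 <= 1 / 5.

Lemma Wf_Sf : Wf z = 1 + z ^ 2 - 2 * z ^ 2 * Sf z.
Proof. unfold Sf. field. exact Hz0. Qed.

(* W^2 = (1 - z^2)(1 - 5 z^2), so 1 - 5 z^2 <= W <= 1 - z^2. *)
Lemma Sf_bounds : 1 <= Sf z <= 3.
Proof.
  assert (Hz2 : 0 < z ^ 2) by (apply pow2_gt_0, Hz0).
  assert (HW2 : Wf z * Wf z = (1 - z ^ 2) * (1 - 5 * z ^ 2))
    by (unfold Wf; rewrite sqrt_sqrt; [ring|nra]).
  assert (HW0 : 0 <= Wf z) by apply sqrt_pos.
  assert (HWl : 1 - 5 * z ^ 2 <= Wf z) by nra.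
  assert (HWu : Wf z <= 1 - z ^ 2) by nra.
  pose proof Wf_Sf. split; nra.
Qed.

Lemma Sf_quadratic : z ^ 2 * Sf z ^ 2 - (1 + z ^ 2) * Sf z + (2 - z ^ 2) = 0.
Proof.
  assert (Hz2 : 0 < z ^ 2) by (apply pow2_gt_0, Hz0).
  assert (HW2 : Wf z * Wf z = 1 - 6 * z ^ 2 + 5 * z ^ 4) by (unfold Wf; rewrite sqrt_sqrt; nra).
  rewrite Wf_Sf in HW2.
  apply (Rmult_eq_reg_l (4 * z ^ 2)); [nra|lra].
Qed.

Lemma numerator_Sf : 3 * z ^ 2 - 3 + Wf z = 2 * (z ^ 2 - 2) * (Sf z - 1) / Sf z.
Proof.
  pose proof Sf_bounds. pose proof Sf_quadratic. rewrite Wf_Sf.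
  apply (Rmult_eq_reg_r (Sf z)); [|lra]. field_simplify; [nra|lra].
Qed.

Lemma s1_Sf : s1 z = / (z * Sf z).
Proof.
  pose proof Sf_bounds. assert (0 < z ^ 2) by (apply pow2_gt_0, Hz0).
  unfold s1. rewrite Wf_Sf. field. repeat split; [lra|exact Hz0|nra].
Qed.

Lemma explicit_level_system : level_system z (black_sol z) (blue_sol z) (down_sol z).
Proof.
  pose proof Sf_bounds. pose proof Sf_quadratic.
  unfold black_sol, blue_sol, down_sol. split; [|split]; intros m.
  - destruct m; simpl; field; lra.
  - destruct m; simpl; field; lra.
  - replace (Sf z - 2) with (z ^ 2 * (Sf z ^ 2 - Sf z - 1)) at 1 by nra.
    simpl; field; lra.
Qed.

Lemma explicit_sum m : black_sol z m + blue_sol z m + down_sol z m = (Sf z - 1) * (z * Sf z) ^ m.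
Proof.
  pose proof Sf_bounds. unfold black_sol, blue_sol, down_sol. destruct m; simpl; field; lra.
Qed.

Lemma down_sol_bound m : Rabs z <= 1 / 3 -> Rabs (down_sol z m) <= 1.
Proof.
  intros Hz3. pose proof Sf_bounds. unfold down_sol.
  rewrite Rabs_mult, <- RPow_abs. rewrite <- (Rmult_1_r 1).
  apply Rmult_le_compat; [apply Rabs_pos|apply pow_le, Rabs_pos|apply Rabs_le; lra|].
  rewrite <- (pow1 m). apply pow_incr. split; [apply Rabs_pos|].
  rewrite Rabs_mult, (Rabs_right (Sf z)) by lra. nra.
Qed.

End ExplicitSolution.

Definition paths_gf (z : R) (s : step) (m : nat) : R :=
  Series (fun n => INR (paths n s (Z.of_nat m)) * z ^ n).

Section PathsGF.

Variable z : R.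
Hypothesis Hz : Rabs z < 1 / 3.

Lemma paths_coef_bound n s h : Rabs (INR (paths n s h) * z ^ n) <= (3 * Rabs z) ^ n.
Proof.
  rewrite Rabs_mult, <- RPow_abs, Rpow_mult_distr, Rabs_right by (apply Rle_ge, pos_INR).
  apply Rmult_le_compat_r; [apply pow_le, Rabs_pos|].
  replace (3 ^ n) with (INR (3 ^ n)) by (rewrite pow_INR, INR_IZR_INZ; reflexivity).
  apply le_INR, count_words_le.
Qed.

Lemma is_series_geom_3z : is_series (fun n => (3 * Rabs z) ^ n) (/ (1 - 3 * Rabs z)).
Proof. apply is_series_geom. rewrite Rabs_right; pose proof (Rabs_pos z); lra. Qed.

Lemma paths_gf_spec s m :
  is_series (fun n => INR (paths n s (Z.of_nat m)) * z ^ n) (paths_gf z s m).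
Proof.
  apply Series_correct.
  apply (@ex_series_le R_AbsRing R_CompleteNormedModule _ (fun n => (3 * Rabs z) ^ n)).
  - intros n. apply paths_coef_bound.
  - eexists. apply is_series_geom_3z.
Qed.

Lemma paths_gf_bound s m : Rabs (paths_gf z s m) <= / (1 - 3 * Rabs z).
Proof.
  apply (is_series_Rabs_le _ _ _ _ (fun n => paths_coef_bound n s _)
           (paths_gf_spec s m) is_series_geom_3z).
Qed.

Lemma paths_gf_UpBlack_0 : paths_gf z UpBlack 0 = 1.
Proof.
  apply is_series_unique.
  replace 1 with (INR (paths 0 UpBlack (Z.of_nat 0)) + z * 0) by (simpl; ring).
  apply is_series_shift, (is_series_ext_R (fun _ => 0)); [|exact is_series_0].
  intros n. rewrite paths_up_S_0 by discriminate. simpl; ring.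
Qed.

Lemma paths_gf_UpBlue_0 : paths_gf z UpBlue 0 = 0.
Proof.
  apply is_series_unique. apply (is_series_ext_R (fun _ => 0)); [|exact is_series_0].
  intros [|n]; [simpl; ring|]. rewrite paths_up_S_0 by discriminate. simpl; ring.
Qed.

Lemma paths_gf_shift s m l :
  paths 0 s (Z.of_nat m) = 0%nat ->
  is_series (fun n => INR (paths (S n) s (Z.of_nat m)) * z ^ n) l -> paths_gf z s m = z * l.
Proof.
  intros H0 H. apply is_series_unique.
  replace (z * l) with (INR (paths 0 s (Z.of_nat m)) + z * l) by (rewrite H0; simpl; ring).
  exact (is_series_shift (fun n => INR (paths n s (Z.of_nat m))) z l H).
Qed.

Lemma paths_gf_UpBlack_S m :
  paths_gf z UpBlack (S m) = z * (paths_gf z Down m + paths_gf z UpBlack m + paths_gf z UpBlue m).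
Proof.
  apply paths_gf_shift; [apply paths_above; lia|].
  apply (is_series_ext_R (fun n => INR (paths n Down (Z.of_nat m)) * z ^ n +
    INR (paths n UpBlack (Z.of_nat m)) * z ^ n + INR (paths n UpBlue (Z.of_nat m)) * z ^ n)).
  { intros n. rewrite paths_UpBlack_S, !plus_INR. ring. }
  repeat apply is_series_Rplus; apply paths_gf_spec.
Qed.

Lemma paths_gf_UpBlue_S m :
  paths_gf z UpBlue (S m) = z * (paths_gf z UpBlack m + paths_gf z UpBlue m).
Proof.
  apply paths_gf_shift; [apply paths_above; lia|].
  apply (is_series_ext_R (fun n => INR (paths n UpBlack (Z.of_nat m)) * z ^ n +
    INR (paths n UpBlue (Z.of_nat m)) * z ^ n)).
  { intros n. rewrite paths_UpBlue_S, !plus_INR. ring. }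
  apply is_series_Rplus; apply paths_gf_spec.
Qed.

Lemma paths_gf_Down m :
  paths_gf z Down m = z * (paths_gf z Down (S m) + paths_gf z UpBlack (S m)).
Proof.
  apply paths_gf_shift; [reflexivity|].
  apply (is_series_ext_R (fun n => INR (paths n Down (Z.of_nat (S m))) * z ^ n +
    INR (paths n UpBlack (Z.of_nat (S m))) * z ^ n)).
  { intros n. rewrite paths_Down_S, !plus_INR. ring. }
  apply is_series_Rplus; apply paths_gf_spec.
Qed.

Lemma paths_gf_level_system :
  level_system z (paths_gf z UpBlack) (paths_gf z UpBlue) (paths_gf z Down).
Proof.
  split; [|split]; intros m.
  - apply paths_gf_UpBlack_S.
  - apply paths_gf_UpBlue_S.
  - apply paths_gf_Down.
Qed.

End PathsGF.

Lemma pow2_le_fifth z : Rabs z <= 1 / 10 -> z ^ 2 <= 1 / 5.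
Proof. intros Hz. rewrite <- pow2_abs. pose proof (Rabs_pos z). nra. Qed.

Lemma g_level_gf z j : z <> 0 -> Rabs z <= 1 / 10 ->
  is_series (fun n => INR (g n j) * z ^ n) ((Sf z - 1) * (z * Sf z) ^ j).
Proof.
  intros Hz0 Hz.
  assert (Hz3 : Rabs z < 1 / 3) by lra.
  pose proof (pow2_le_fifth z Hz) as Hz5.
  destruct (level_system_unique z Hz0 Hz _ _ _ _ _ _
              (paths_gf_level_system z Hz3) (explicit_level_system z Hz0 Hz5)) with j
    as (Eb & El & Ed).
  - rewrite paths_gf_UpBlack_0 by exact Hz3. reflexivity.
  - rewrite paths_gf_UpBlue_0 by exact Hz3. reflexivity.
  - exists (/ (1 - 3 * Rabs z)). intros m. apply paths_gf_bound, Hz3.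
  - exists 1. intros m. apply down_sol_bound; assumption || lra.
  - rewrite <- explicit_sum by assumption. rewrite <- Eb, <- El, <- Ed.
    apply (is_series_ext_R (fun n => INR (paths n UpBlack (Z.of_nat j)) * z ^ n +
      INR (paths n UpBlue (Z.of_nat j)) * z ^ n + INR (paths n Down (Z.of_nat j)) * z ^ n)).
    { intros n. rewrite g_paths. unfold sum_steps. rewrite !plus_INR. ring. }
    repeat apply is_series_Rplus; apply paths_gf_spec, Hz3.
Qed.

Lemma g_coef_bound n j u z :
  Rabs (INR (g n j) * u ^ j * z ^ n) <= 3 * (3 * Rabs z) ^ n * Rabs u ^ j.
Proof.
  assert (Hg : INR (g n j) <= 3 * 3 ^ n).
  { replace (3 * 3 ^ n) with (INR (3 * 3 ^ n))
      by (rewrite mult_INR, pow_INR, INR_IZR_INZ; reflexivity).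
    apply le_INR, g_le. }
  pose proof (pow_le (Rabs u) j (Rabs_pos u)). pose proof (pow_le (Rabs z) n (Rabs_pos z)).
  rewrite !Rabs_mult, <- !RPow_abs, Rpow_mult_distr, Rabs_right by (apply Rle_ge, pos_INR).
  replace (3 * (3 ^ n * Rabs z ^ n) * Rabs u ^ j) with (3 * 3 ^ n * Rabs u ^ j * Rabs z ^ n)
    by ring.
  apply Rmult_le_compat_r; [assumption|]. apply Rmult_le_compat_r; assumption.
Qed.

Lemma g_bivariate_gf z u : z <> 0 -> Rabs z <= 1 / 10 -> Rabs u < 1 -> Rabs (z * Sf z * u) < 1 ->
  is_series (fun n => sum_n (fun j => INR (g n j) * u ^ j) n * z ^ n)
    ((Sf z - 1) / (1 - z * Sf z * u)).
Proof.
  intros Hz0 Hz Hu Hlam.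
  apply (is_series_ext_R (fun n => sum_n (fun j => INR (g n j) * u ^ j * z ^ n) n)).
  { intros n. rewrite !sum_n_Reals, Rmult_comm, scal_sum. reflexivity. }
  apply (is_series_triangular _ (fun j => (Sf z - 1) * (z * Sf z) ^ j * u ^ j) _ 3
           (3 * Rabs z) (Rabs u)).
  - pose proof (Rabs_pos z). lra.
  - pose proof (Rabs_pos u). lra.
  - intros n j Hnj. rewrite g_above by exact Hnj. simpl. ring.
  - intros n j. apply g_coef_bound.
  - intros j. apply (is_series_ext_R (fun n => INR (g n j) * z ^ n * u ^ j)); [intros n; ring|].
    apply is_series_scal_r, g_level_gf; assumption.
  - apply (is_series_ext_R (fun j => (Sf z - 1) * (z * Sf z * u) ^ j)).
    { intros j. rewrite Rpow_mult_distr. ring. }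
    apply is_series_geom_scal, Hlam.
Qed.

Theorem theorem3 :
  exists r : R, 0 < r /\
  forall z : R, 0 < Rabs z < r ->
    (forall u : R, Rabs u < r ->
       is_series (fun n : nat => sum_n (fun j : nat => INR (g n j) * u ^ j) n * z ^ n)
         ((3 * z ^ 2 - 3 + Wf z) / (2 * z * (2 - z ^ 2) * (u - s1 z))))
    /\
    (forall j : nat,
       is_series (fun n : nat => INR (g n j) * z ^ n)
         ((3 * z ^ 2 - 3 + Wf z) / (2 * (z ^ 2 - 2)) * z ^ j * Sf z ^ (j + 1))).
Proof.
  exists (1 / 10). split; [lra|]. intros z [Hz0 Hz].
  assert (Hz0' : z <> 0) by (intros ->; rewrite Rabs_R0 in Hz0; lra).
  pose proof (pow2_le_fifth z ltac:(lra)) as Hz5.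
  pose proof (Sf_bounds z Hz0' Hz5) as HS.
  rewrite (numerator_Sf z Hz0' Hz5). split.
  - intros u Hu.
    assert (Hlam : Rabs (z * Sf z * u) < 1).
    { rewrite !Rabs_mult, (Rabs_right (Sf z)) by lra.
      assert (Rabs z * Sf z <= 3 / 10) by nra. pose proof (Rabs_pos u). nra. }
    assert (Hlam1 : 1 - z * Sf z * u <> 0) by (pose proof (Rle_abs (z * Sf z * u)); lra).
    replace (2 * (z ^ 2 - 2) * (Sf z - 1) / Sf z / (2 * z * (2 - z ^ 2) * (u - s1 z)))
      with ((Sf z - 1) / (1 - z * Sf z * u))
      by (rewrite (s1_Sf z Hz0' Hz5); field; repeat split; nra).
    apply g_bivariate_gf; [exact Hz0'|lra|lra|exact Hlam].
  - intros j.
    replace (2 * (z ^ 2 - 2) * (Sf z - 1) / Sf z / (2 * (z ^ 2 - 2)) * z ^ j * Sf z ^ (j + 1))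
      with ((Sf z - 1) * (z * Sf z) ^ j)
      by (rewrite Rpow_mult_distr, pow_add; field; nra).
    apply g_level_gf; [exact Hz0'|lra].
Qed.
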